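(* Let $L$ be a distributive lattice with a maximum and a minimum. Then $\mathrm{FVL}\langle L\rangle$ is order dense in $\mathrm{FBL}\langle L\rangle$, i.e. for every $f\in\mathrm{FBL}\langle L\rangle$ with $f>0$ there exists $g\in\mathrm{FVL}\langle L\rangle$ with $0<g\le f$.
   Context: $L^*$ is the set of all lattice homomorphisms $x^*:L\to[-1,1]$; for $x\in L$, $\delta_x:L^*\to\mathbb R$ is $\delta_x(x^* )=x^*(x)$. A function $f:L^*\to\mathbb R$ is positively homogeneous if $f(\lambda x^* )=\lambda f(x^* )$ whenever $\lambda\ge0$ and $\lambda x^*\in L^*$; for such $f$, $\|f\|=\sup\{\sum_{i=1}^m|f(x_i^* )|: m\in\mathbb N,\ x_i^*\in L^*,\ \sup_{x\in L}\sum_{i=1}^m|x_i^*(x)|\le1\}$. $\mathrm{FVL}\langle L\rangle$ is the vector sublattice generated by $\{\delta_x:x\in L\}$ (pointwise operations), and $\mathrm{FBL}\langle L\rangle$ is its norm closure inside the Banach lattice of positively homogeneous functions with finite norm, ordered pointwise. *)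

From HB Require Import structures.
From mathcomp Require Import all_boot all_order all_algebra.
From mathcomp Require Import all_classical all_reals ereal.
Set Implicit Arguments. Unset Strict Implicit. Unset Printing Implicit Defensive.
Import Order.TTheory GRing.Theory Num.Theory.
Local Open Scope ring_scope.

Section FBL.
Variables (R : realType) (d : Order.disp_t) (L : tbDistrLatticeType d).

Definition Lstar (xs : L -> R) : Prop :=
  (forall x, -1 <= xs x <= 1) /\
  (forall x y, xs (Order.meet x y) = Num.min (xs x) (xs y)) /\
  (forall x y, xs (Order.join x y) = Num.max (xs x) (xs y)).

Definition delta (x : L) : (L -> R) -> R := fun xs => xs x.

Definition scale_star (lam : R) (xs : L -> R) : L -> R := fun x => lam * xs x.

Definition pos_homogeneous (f : (L -> R) -> R) : Prop :=
  forall (lam : R) (xs : L -> R), 0 <= lam -> Lstar xs -> Lstar (scale_star lam xs) ->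
    f (scale_star lam xs) = lam * f xs.

Definition fbl_norm (f : (L -> R) -> R) : \bar R :=
  ereal_sup [set r : \bar R | exists (m : nat) (xs : 'I_m -> (L -> R)),
     [/\ (forall i, Lstar (xs i)),
        (ereal_sup [set ((\sum_(i < m) `|xs i x|)%:E) | x in [set: L]] <= 1%:E)%E
      & r = (\sum_(i < m) `|f (xs i)|)%:E]]%classic.

Inductive FVL : ((L -> R) -> R) -> Prop :=
  | FVL_delta x : FVL (delta x)
  | FVL_zero : FVL (fun _ => 0)
  | FVL_add f g : FVL f -> FVL g -> FVL (fun xs => f xs + g xs)
  | FVL_scale (a : R) f : FVL f -> FVL (fun xs => a * f xs)
  | FVL_max f g : FVL f -> FVL g -> FVL (fun xs => Num.max (f xs) (g xs))
  | FVL_min f g : FVL f -> FVL g -> FVL (fun xs => Num.min (f xs) (g xs)).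

Definition FBL (f : (L -> R) -> R) : Prop :=
  pos_homogeneous f /\ (fbl_norm f < +oo)%E /\
  forall eps : R, 0 < eps -> exists g, FVL g /\
    (fbl_norm (fun xs => (f xs - g xs)%R) < eps%:E)%E.

Definition fle (f g : (L -> R) -> R) : Prop := forall xs, Lstar xs -> f xs <= g xs.
Definition fpos (f : (L -> R) -> R) : Prop :=
  fle (fun _ => 0) f /\ exists xs, Lstar xs /\ f xs != 0.

End FBL.

From HB Require Import structures.
From mathcomp Require Import all_boot all_order all_algebra.
From mathcomp Require Import all_classical all_reals ereal.
From mathcomp Require Import lra.
Import Order.TTheory GRing.Theory Num.Theory.
Local Open Scope ring_scope.
Set Implicit Arguments. Unset Strict Implicit.

(* Every phi in L^* satisfies |phi x| <= e phi := max (phi top) (- phi bot) <= 1,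
   and e (star_norm below) belongs to FVL.  If g in FVL is eps-close to f on L^*, positive
   homogeneity of f - g upgrades this to |f - g| <= eps e on L^* (rescale phi by
   1 / e phi).  Choosing eps = f x0 / 4 for a point x0 with f x0 > 0, the element
   (g - eps e)^+ of FVL lies below f and is positive at x0. *)

Section FBL_order_dense.
Variables (R : realType) (d : Order.disp_t) (L : tbDistrLatticeType d).

Lemma FVL_homogeneous (g : (L -> R) -> R) : FVL g ->
  forall (lam : R) xs, 0 <= lam -> g (scale_star lam xs) = lam * g xs.
Proof.
elim=> {g} [x||g h _ IHg _ IHh|a g _ IH|g h _ IHg _ IHh|g h _ IHg _ IHh] lam xs hl /=.
- by [].
- by rewrite mulr0.
- by rewrite IHg // IHh // mulrDr.
- by rewrite IH // mulrCA.
- by rewrite IHg // IHh // maxr_pMr.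
- by rewrite IHg // IHh // minr_pMr.
Qed.

Lemma FVL_pos_homogeneous (g : (L -> R) -> R) : FVL g -> pos_homogeneous g.
Proof. by move=> hg lam xs hl _ _; exact: FVL_homogeneous. Qed.

Lemma pos_homogeneousB (f g : (L -> R) -> R) :
  pos_homogeneous f -> pos_homogeneous g ->
  pos_homogeneous (fun xs => f xs - g xs).
Proof. by move=> hf hg lam xs hl Lx Llx; rewrite hf // hg // mulrBr. Qed.

Lemma normr_le_fbl_norm (h : (L -> R) -> R) xs : Lstar xs ->
  (`|h xs|%:E <= fbl_norm h)%E.
Proof.
move=> Lx; apply: ereal_sup_ubound; exists 1%N, (fun _ => xs); split => //.
  apply: ge_ereal_sup => r [x _ <-].
  by rewrite big_ord1 lee_fin ler_norml; case: Lx => /(_ x) -> _.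
by rewrite big_ord1.
Qed.

Lemma Lstar_bounds (xs : L -> R) : Lstar xs ->
  forall x, xs \bot%O <= xs x <= xs \top%O.
Proof.
case=> _ [hm hj] x.
have lo : xs \bot%O <= xs x by rewrite -[xs x](congr1 xs (join0x x)) hj le_max lexx.
have hi : xs x <= xs \top%O by rewrite -[xs x](congr1 xs (meetx1 x)) hm ge_min lexx orbT.
by rewrite lo hi.
Qed.

Definition star_norm : (L -> R) -> R :=
  fun xs => Num.max (delta \top%O xs) ((-1) * delta \bot%O xs).

Lemma FVL_star_norm : FVL star_norm.
Proof. by apply: FVL_max; [|apply: FVL_scale]; exact: FVL_delta. Qed.

Lemma normr_le_star_norm (xs : L -> R) : Lstar xs ->
  forall x, `|xs x| <= star_norm xs.
Proof.
move=> Lx x; have /andP[lo hi] := Lstar_bounds Lx x.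
rewrite /star_norm /delta mulN1r ler_norml lerNl !le_max.
by rewrite lerN2 lo hi !orbT.
Qed.

Lemma star_norm_ge0 (xs : L -> R) : Lstar xs -> 0 <= star_norm xs.
Proof. by move=> Lx; apply: le_trans (normr_le_star_norm Lx \top%O). Qed.

Lemma star_norm_le1 (xs : L -> R) : Lstar xs -> star_norm xs <= 1.
Proof.
case=> Lb _; have /andP[_ t1] := Lb \top%O; have /andP[b1 _] := Lb \bot%O.
by rewrite /star_norm /delta ge_max t1 mulN1r lerNl.
Qed.

Lemma Lstar_scale (lam : R) (xs : L -> R) : Lstar xs -> 0 <= lam ->
  (forall x, `|lam * xs x| <= 1) -> Lstar (scale_star lam xs).
Proof.
case=> _ [hm hj] hl hb; split; [|split] => [x|x y|x y].
- by rewrite -ler_norml; exact: hb.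
- by rewrite /scale_star hm minr_pMr.
- by rewrite /scale_star hj maxr_pMr.
Qed.

Lemma pos_homogeneous_le_star_norm (h : (L -> R) -> R) (eps : R) :
  pos_homogeneous h -> (forall y, Lstar y -> `|h y| <= eps) ->
  forall xs, Lstar xs -> `|h xs| <= eps * star_norm xs.
Proof.
move=> hh hb xs Lx.
have t0 := star_norm_ge0 Lx.
have [t_eq0 | t_neq0] := eqVneq (star_norm xs) 0.
  have xs0 : scale_star 0 xs = xs.
    apply: funext => x; rewrite /scale_star mul0r; apply/esym/eqP.
    by rewrite -normr_le0 -t_eq0 normr_le_star_norm.
  by rewrite -xs0 hh ?xs0 // mul0r normr0 t_eq0 mulr0.
have tp : 0 < star_norm xs by rewrite lt_def t_neq0.
set t := star_norm xs in t0 tp *.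
set y := scale_star t^-1 xs.
have Ly : Lstar y.
  apply: Lstar_scale; rewrite ?invr_ge0 // => x.
  by rewrite normrM ger0_norm ?invr_ge0 // ler_pdivrMl // mulr1 normr_le_star_norm.
have xs_y : scale_star t y = xs.
  by apply: funext => x; rewrite /y /scale_star mulrA mulfV ?mul1r.
rewrite -xs_y hh ?xs_y // normrM ger0_norm // mulrC ler_pM2r //.
exact: hb.
Qed.

End FBL_order_dense.

Theorem mainTheorem7 (R : realType) (d : Order.disp_t) (L : tbDistrLatticeType d)
  (f : (L -> R) -> R) :
  FBL f -> fpos f ->
  exists g : (L -> R) -> R, FVL g /\ fpos g /\ fle g f.
Proof.
move=> [hf [_ happ]] [f_ge0 [x0 [Lx0 fx0_neq0]]].
have fx0_gt0 : 0 < f x0 by rewrite lt_def fx0_neq0 f_ge0.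
set eps := f x0 / 4.
have eps_gt0 : 0 < eps by rewrite divr_gt0.
have [g [hg g_close]] := happ eps eps_gt0.
have dev : forall xs, Lstar xs -> `|f xs - g xs| <= eps * star_norm xs.
  apply: pos_homogeneous_le_star_norm; first exact: pos_homogeneousB hf (FVL_pos_homogeneous hg).
  move=> y Ly; rewrite -lee_fin; apply: le_trans (ltW g_close).
  exact: (normr_le_fbl_norm (fun xs => f xs - g xs) Ly).
pose h xs := Num.max (g xs + (- eps) * star_norm xs) 0.
exists h; split; [|split; [split|]].
- apply: FVL_max; last exact: FVL_zero.
  by apply: FVL_add => //; apply: FVL_scale; exact: FVL_star_norm.
- by move=> xs _; rewrite /h le_max lexx orbT.
- exists x0; split => //; apply/lt0r_neq0; rewrite /h lt_max; apply/orP; left.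
  have := dev x0 Lx0; rewrite ler_norml => /andP[_ close].
  have eps_e : eps * star_norm x0 <= eps := ler_piMr (ltW eps_gt0) (star_norm_le1 Lx0).
  have f_eq : f x0 = 4 * eps by rewrite /eps mulrC divfK.
  move: close eps_e eps_gt0 f_eq; rewrite mulNr; move: (eps * _) => es; lra.
- move=> xs Lx; rewrite /h ge_max f_ge0 // andbT mulNr.
  have := dev xs Lx; rewrite ler_norml => /andP[close _].
  move: close; move: (eps * _) => es; lra.
Qed.
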